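(* Let $\widehat{\mathcal T}_\bullet$ be an arbitrary hierarchical mesh on $\widehat\Omega$, and let $E=[0,1]^{I-1}\times\{e\}\times[0,1]^{d-I}$ with $I\in\{1,\dots,d\}$, $e\in\{0,1\}$. Let $\widehat{\mathcal K}^0|_E:=(\widehat{\mathcal K}^0_1,\dots,\widehat{\mathcal K}^0_{I-1},\widehat{\mathcal K}^0_{I+1},\dots,\widehat{\mathcal K}^0_d)$ and $\widehat\Omega^k_\bullet|_E:=\{(s_1,\dots,s_{I-1},s_{I+1},\dots,s_d):(s_1,\dots,s_d)\in\widehat\Omega^k_\bullet\cap E\}$, and let $\widehat{\mathcal H}_\bullet|_E$ be the $(d-1)$-dimensional hierarchical basis for these data. Then, identifying functions on $[0,1]^{d-1}$ with functions on $E$, $\widehat{\mathcal H}_\bullet|_E=\{\widehat\beta|_E:\widehat\beta\in\widehat{\mathcal H}_\bullet,\ \widehat\beta|_E\neq0\}$. Moreover, if $\widehat\beta_1,\widehat\beta_2\in\widehat{\mathcal H}_\bullet$, $\widehat\beta_1\ne\widehat\beta_2$ and $\widehat\beta_1|_E\ne0$, then $\widehat\beta_1|_E\ne\widehat\beta_2|_E$.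
   Context: Parameter domain $\widehat\Omega=(0,1)^d$, $d\ge2$ (for $d-1=1$ the same definitions apply in one dimension). Fix degrees $p_1,\dots,p_d\ge1$. For each $i$ let $\widehat{\mathcal K}^0_i=(t^0_{i,j})_{j=0}^{N^0_i+p_i}$ be a nondecreasing vector in $[0,1]$ whose first $p_i+1$ entries are $0$, last $p_i+1$ entries are $1$, and whose interior knots have multiplicity $\le p_i$. $\widehat{\mathcal K}^{k+1}_i$ arises from $\widehat{\mathcal K}^k_i$ by inserting the midpoint of every nondegenerate knot span once. $\widehat{\mathcal B}^k$ denotes the tensor-product B-splines of degree $(p_1,\dots,p_d)$ for $\widehat{\mathcal K}^k$, and $\widehat{\mathcal T}^k$ the closed cells of level $k$ (nondegenerate boxes $\prod_i[t^k_{i,j_i-1},t^k_{i,j_i}]$). A hierarchical mesh is given by closed sets $[0,1]^d=\widehat\Omega^0_\bullet\supseteq\widehat\Omega^1_\bullet\supseteq\cdots$, each $\widehat\Omega^k_\bullet$ ($k\ge1$) a union of cells of $\widehat{\mathcal T}^{k-1}$, with $\widehat\Omega^M_\bullet=\emptyset$ for some $M$; its hierarchical basis is $\widehat{\mathcal H}_\bullet=\bigcup_k\{\widehat\beta\in\widehat{\mathcal B}^k:{\rm supp}\,\widehat\beta\subseteq\widehat\Omega^k_\bullet,\ {\rm supp}\,\widehat\beta\not\subseteq\widehat\Omega^{k+1}_\bullet\}$. *)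

From Stdlib Require Import Reals List Arith.
Import ListNotations.
Open Scope R_scope.

Definition Rltb (a b : R) : bool := if Rlt_dec a b then true else false.
Definition Rleb (a b : R) : bool := if Rle_dec a b then true else false.
Definition Reqb (a b : R) : bool := if Req_EM_T a b then true else false.

(* a / b with the convention 0/0 := 0 (used in Cox-de Boor) *)
Definition frac (a b : R) : R := if Req_EM_T b 0 then 0 else a / b.

(* A knot vector is a list of reals, t_j = nth j t 0 (0-based). *)
Definition knot (t : list R) (j : nat) : R := nth j t 0.

Fixpoint nondecreasing (t : list R) : Prop :=
  match t with
  | a :: ((b :: _) as r) => a <= b /\ nondecreasing r
  | _ => True
  end.

Definition multiplicity (v : R) (t : list R) : nat :=
  length (filter (fun x => Reqb x v) t).

Definition valid_knots (p : nat) (t : list R) : Prop :=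
  (p + 1 <= length t)%nat /\
  nondecreasing t /\
  (forall j, (j < length t)%nat -> 0 <= knot t j <= 1) /\
  (forall j, (j <= p)%nat -> knot t j = 0 /\ knot t (length t - 1 - j) = 1) /\
  (forall j, (j < length t)%nat -> 0 < knot t j < 1 ->
       (multiplicity (knot t j) t <= p)%nat).

Fixpoint refine (t : list R) : list R :=
  match t with
  | a :: ((b :: _) as r) =>
      if Rlt_dec a b then a :: (a + b) / 2 :: refine r else a :: refine r
  | _ => t
  end.

Definition knots (K0 : nat -> list R) (k i : nat) : list R :=
  Nat.iter k refine (K0 i).

Definition nbs (t : list R) (p : nat) : nat := (length t - p - 1)%nat.

(* Degree 0: indicator of [t_j, t_{j+1}), with the last nondegenerate span
   closed at the right endpoint 1 (so that B-splines are defined on the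
   closed interval [0,1]). *)
Definition bsp0 (t : list R) (j : nat) (x : R) : R :=
  if orb (andb (Rleb (knot t j) x) (Rltb x (knot t (S j))))
         (andb (andb (Rltb (knot t j) (knot t (S j))) (Reqb x 1))
               (Reqb (knot t (S j)) 1))
  then 1 else 0.

Fixpoint bsp (t : list R) (p : nat) (j : nat) (x : R) : R :=
  match p with
  | O => bsp0 t j x
  | S q =>
      frac (x - knot t j) (knot t (j + p) - knot t j) * bsp t q j x
      + frac (knot t (j + p + 1) - x) (knot t (j + p + 1) - knot t (S j))
          * bsp t q (S j) x
  end.

(* A point of R^d is x : nat -> R, only coordinates 0..d-1 being relevant. *)
Definition pt := nat -> R.

Definition cube (d : nat) (x : pt) : Prop := forall i, (i < d)%nat -> 0 <= x i <= 1.

Fixpoint prodR (n : nat) (f : nat -> R) : R :=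
  match n with O => 1 | S m => prodR m f * f m end.

Definition bspline (d : nat) (p : nat -> nat) (K0 : nat -> list R) (k : nat)
  (j : nat -> nat) (x : pt) : R :=
  prodR d (fun i => bsp (knots K0 k i) (p i) (j i) (x i)).

Definition valid_index (d : nat) (p : nat -> nat) (K0 : nat -> list R) (k : nat)
  (j : nat -> nat) : Prop :=
  forall i, (i < d)%nat -> (j i < nbs (knots K0 k i) (p i))%nat.

Definition closure (d : nat) (S : pt -> Prop) (x : pt) : Prop :=
  forall eps, eps > 0 -> exists y, S y /\ forall i, (i < d)%nat -> Rabs (x i - y i) < eps.

Definition supp_sub (d : nat) (f : pt -> R) (S : pt -> Prop) : Prop :=
  forall x, closure d (fun y => f y <> 0) x -> S x.

Definition is_cell (d : nat) (K0 : nat -> list R) (k : nat) (j : nat -> nat) : Prop :=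
  forall i, (i < d)%nat ->
    (1 <= j i < length (knots K0 k i))%nat /\
    knot (knots K0 k i) (j i - 1) < knot (knots K0 k i) (j i).

Definition in_cell (d : nat) (K0 : nat -> list R) (k : nat) (j : nat -> nat) (x : pt) : Prop :=
  forall i, (i < d)%nat ->
    knot (knots K0 k i) (j i - 1) <= x i <= knot (knots K0 k i) (j i).

Definition hier_mesh (d : nat) (K0 : nat -> list R) (Om : nat -> pt -> Prop) : Prop :=
  (forall x, Om O x <-> cube d x) /\
  (forall k x, Om (S k) x -> Om k x) /\
  (forall k, exists C : (nat -> nat) -> Prop,
      forall x, Om (S k) x <-> exists j, C j /\ is_cell d K0 k j /\ in_cell d K0 k j x) /\
  (exists M, forall x, ~ Om M x).

Definition eq_on (d : nat) (f g : pt -> R) : Prop := forall x, cube d x -> f x = g x.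
Definition nonzero_on (d : nat) (f : pt -> R) : Prop := exists x, cube d x /\ f x <> 0.

Definition inH (d : nat) (p : nat -> nat) (K0 : nat -> list R) (Om : nat -> pt -> Prop)
  (beta : pt -> R) : Prop :=
  exists k j, valid_index d p K0 k j /\
    supp_sub d (bspline d p K0 k j) (Om k) /\
    ~ supp_sub d (bspline d p K0 k j) (Om (S k)) /\
    eq_on d beta (bspline d p K0 k j).

(* 0-based direction I; drop direction I from a family *)
Definition skip {A : Type} (I : nat) (f : nat -> A) : nat -> A :=
  fun i => if (i <? I)%nat then f i else f (S i).

Definition ins (I : nat) (e : R) (s : pt) : pt :=
  fun i => if (i <? I)%nat then s i else if (i =? I)%nat then e else s (i - 1)%nat.

Definition restr (I : nat) (e : R) (f : pt -> R) : pt -> R := fun s => f (ins I e s).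

Definition restrOm (I : nat) (e : R) (Om : nat -> pt -> Prop) : nat -> pt -> Prop :=
  fun k s => Om k (ins I e s).

(* Restricting a tensor-product B-spline to the face [x_I = e] leaves the product of its
   factors in the other directions, times the value at [e] of its factor in direction [I].
   On the open knot vectors of every level exactly one univariate B-spline is nonzero at an
   endpoint [e], with value [1], and its support meets no knot of any coarser level in the
   interior of the cell touching [e]. Hence a level-[k] B-spline that does not vanish on the
   face restricts to a level-[k] B-spline of the face, every face B-spline arises this way, and
   its support lies in [Om k] (resp. [Om (S k)]) iff the support of the restriction lies in the
   restricted domain: this transfers membership in the hierarchical basis in both directions.
   For injectivity, two basis functions of different levels cannot have the same restriction,
   since the coarser one is not supported in [Om (S k)] while the finer one is; at the same
   level the indices must agree, because distinct univariate B-splines of one knot vector are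
   not proportional, as they vanish to different orders at the left end of their supports. *)

From Stdlib Require Import Reals List Arith Lia Lra Psatz Classical FunctionalExtensionality.
Import ListNotations.
Open Scope R_scope.

Definition unit_knots (t : list R) : Prop :=
  (forall a b, (a <= b)%nat -> (b < length t)%nat -> knot t a <= knot t b) /\
  (forall a, 0 <= knot t a <= 1).

Lemma bsp0_spec t j x :
  ((knot t j <= x < knot t (S j)) \/ (knot t j < knot t (S j) /\ x = 1 /\ knot t (S j) = 1))
   /\ bsp0 t j x = 1
  \/ ~((knot t j <= x < knot t (S j)) \/ (knot t j < knot t (S j) /\ x = 1 /\ knot t (S j) = 1))
   /\ bsp0 t j x = 0.
Proof.
  unfold bsp0, Rleb, Rltb, Reqb.
  destruct (Rle_dec (knot t j) x); destruct (Rlt_dec x (knot t (S j)));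
  destruct (Rlt_dec (knot t j) (knot t (S j))); destruct (Req_EM_T x 1);
  destruct (Req_EM_T (knot t (S j)) 1); simpl;
  first [ left; split; [ tauto | reflexivity ]
        | right; split; [ intros [H|H]; lra | reflexivity ] ].
Qed.

Lemma frac_div a b : b <> 0 -> frac a b = a / b.
Proof. intros; unfold frac; destruct (Req_EM_T b 0); [contradiction|reflexivity]. Qed.

Lemma frac0 b : frac 0 b = 0.
Proof. unfold frac; destruct (Req_EM_T b 0); [reflexivity|]; unfold Rdiv; ring. Qed.

Lemma bspS t q j x : bsp t (S q) j x =
  frac (x - knot t j) (knot t (j + S q) - knot t j) * bsp t q j x
  + frac (knot t (j + S q + 1) - x) (knot t (j + S q + 1) - knot t (S j)) * bsp t q (S j) x.
Proof. reflexivity. Qed.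

Lemma nat_transition (P : nat -> Prop) a b : (a < b)%nat -> P a -> ~ P b ->
  exists r, (a <= r < b)%nat /\ P r /\ ~ P (S r).
Proof.
  induction b as [|b IH]; intros Hab Ha Hb; [lia|].
  destruct (Nat.eq_dec a b) as [->|Hne]; [exists b; repeat split; auto; lia|].
  destruct (classic (P b)) as [Pb|Pb].
  - exists b; repeat split; auto; lia.
  - destruct (IH ltac:(lia) Ha Pb) as [r [Hr HP]]. exists r; split; [lia|exact HP].
Qed.

Lemma pow_gap_le h n1 n2 : 0 < h <= 1 -> (n1 < n2)%nat -> h ^ n2 <= h ^ n1 * h.
Proof.
  intros Hh Hn. replace n2 with (n1 + 1 + (n2 - n1 - 1))%nat by lia.
  rewrite !pow_add, pow_1.
  assert (h ^ (n2 - n1 - 1) <= 1) by (rewrite <- (pow1 (n2 - n1 - 1)); apply pow_incr; lra).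
  pose proof (pow_lt h n1 ltac:(lra)). pose proof (pow_lt h (n2 - n1 - 1) ltac:(lra)).
  assert (0 < h ^ n1 * h) by (apply Rmult_lt_0_compat; lra).
  nra.
Qed.

Definition grows_like (f : R -> R) (a c : R) (n : nat) : Prop :=
  exists L U, 0 < L /\ 0 < U /\
    forall x, a < x <= (a + c) / 2 -> L * (x - a) ^ n <= f x <= U * (x - a) ^ n.

Lemma grows_like_pos f a c n x : grows_like f a c n -> a < x <= (a + c) / 2 -> 0 < f x.
Proof.
  intros [L [U [HL [_ H]]]] Hx. specialize (H x Hx).
  pose proof (pow_lt (x - a) n ltac:(lra)). nra.
Qed.

Lemma grows_like_ext f g a c n : (forall x, a < x <= (a + c) / 2 -> f x = g x) ->
  grows_like f a c n -> grows_like g a c n.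
Proof.
  intros Hfg [L [U [HL [HU H]]]]. exists L, U. split; [exact HL|split; [exact HU|]].
  intros x Hx. rewrite <- Hfg by exact Hx. apply H, Hx.
Qed.

Lemma grows_like_plus f g a c n : grows_like f a c n -> grows_like g a c n ->
  grows_like (fun x => f x + g x) a c n.
Proof.
  intros [L1 [U1 [HL1 [HU1 H1]]]] [L2 [U2 [HL2 [HU2 H2]]]].
  exists (L1 + L2), (U1 + U2). split; [lra|split; [lra|]].
  intros x Hx. specialize (H1 x Hx). specialize (H2 x Hx). split; nra.
Qed.

Lemma grows_like_left_weight f a c T n : 0 <= a -> a < c <= T -> T <= 1 ->
  grows_like f a c n -> grows_like (fun x => (x - a) / (T - a) * f x) a c (S n).
Proof.
  intros Ha Hc HT [L [U [HL [HU H]]]].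
  exists L, (U / (c - a)). split; [exact HL|split; [apply Rdiv_lt_0_compat; lra|]].
  intros x Hx. specialize (H x Hx). pose proof (pow_lt (x - a) n ltac:(lra)).
  set (w := (x - a) / (T - a)).
  assert (W1 : x - a <= w).
  { unfold w, Rdiv. assert (1 <= / (T - a)) by (rewrite <- Rinv_1; apply Rinv_le_contravar; lra).
    nra. }
  assert (W2 : w <= (x - a) / (c - a)).
  { unfold w, Rdiv. apply Rmult_le_compat_l; [lra|]. apply Rinv_le_contravar; lra. }
  simpl pow.
  replace (L * ((x - a) * (x - a) ^ n)) with ((x - a) * (L * (x - a) ^ n)) by ring.
  replace (U / (c - a) * ((x - a) * (x - a) ^ n))
    with ((x - a) / (c - a) * (U * (x - a) ^ n)) by (field; lra).
  split; apply Rmult_le_compat; nra.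
Qed.

Lemma grows_like_right_weight f a c T n : a < c <= T ->
  grows_like f a c n -> grows_like (fun x => (T - x) / (T - a) * f x) a c n.
Proof.
  intros Hc [L [U [HL [HU H]]]].
  exists (1 / 2 * L), U. split; [lra|split; [exact HU|]].
  intros x Hx. specialize (H x Hx). pose proof (pow_lt (x - a) n ltac:(lra)).
  set (w := (T - x) / (T - a)).
  assert (Hw : w = 1 - (x - a) / (T - a)) by (unfold w; field; lra).
  assert (0 <= (x - a) / (T - a) <= 1 / 2).
  { split; [unfold Rdiv; apply Rmult_le_pos; [lra|left; apply Rinv_0_lt_compat; lra]|].
    apply Rmult_le_reg_r with (T - a); [lra|].
    unfold Rdiv; rewrite Rmult_assoc, Rinv_l; lra. }
  assert (Hw1 : 1 / 2 <= w <= 1) by lra.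
  assert (0 < L * (x - a) ^ n) by (apply Rmult_lt_0_compat; lra).
  split.
  - apply Rle_trans with (w * (L * (x - a) ^ n)); [nra|apply Rmult_le_compat_l; lra].
  - apply Rle_trans with (1 * f x); [apply Rmult_le_compat_r; lra|lra].
Qed.

(* The ratio [g / f] tends to [0] at [a]. *)
Lemma grows_like_not_proportional f g a c n1 n2 A B : (n1 < n2)%nat -> a < c <= a + 2 ->
  A <> 0 -> B <> 0 -> grows_like f a c n1 -> grows_like g a c n2 ->
  ~ (forall x, a < x <= (a + c) / 2 -> f x * A = g x * B).
Proof.
  intros Hn Hc HA HB [L [U1 [HL [HU1 Hf]]]] [L2 [U [HL2 [HU Hg]]]] Heq.
  pose proof (Rabs_pos_lt A HA). pose proof (Rabs_pos_lt B HB).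
  set (K := L * Rabs A / (2 * U * Rabs B)).
  assert (HK : 0 < K) by (unfold K; apply Rdiv_lt_0_compat; nra).
  set (h := Rmin ((c - a) / 2) K).
  assert (Hh : 0 < h <= (c - a) / 2) by (split; [apply Rmin_glb_lt; lra|apply Rmin_l]).
  assert (HhK : h <= K) by apply Rmin_r.
  assert (Hx : a < a + h <= (a + c) / 2) by lra.
  specialize (Hf (a + h) Hx). specialize (Hg (a + h) Hx). specialize (Heq (a + h) Hx).
  replace (a + h - a) with h in Hf, Hg by ring.
  pose proof (pow_lt h n1 ltac:(lra)) as Hp1. pose proof (pow_lt h n2 ltac:(lra)) as Hp2.
  pose proof (pow_gap_le h n1 n2 ltac:(lra) Hn) as Hgap.
  assert (E : f (a + h) * Rabs A = g (a + h) * Rabs B).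
  { rewrite <- (Rabs_pos_eq (f (a + h))) by nra. rewrite <- (Rabs_pos_eq (g (a + h))) by nra.
    rewrite <- !Rabs_mult, Heq. reflexivity. }
  assert (I1 : L * h ^ n1 * Rabs A <= f (a + h) * Rabs A) by (apply Rmult_le_compat_r; lra).
  assert (I2 : g (a + h) * Rabs B <= U * (h ^ n1 * h) * Rabs B).
  { apply Rmult_le_compat_r; [lra|]. pose proof (Rmult_le_compat_l U _ _ ltac:(lra) Hgap). lra. }
  assert (I3 : U * (h ^ n1 * h) * Rabs B <= U * (h ^ n1 * K) * Rabs B).
  { apply Rmult_le_compat_r; [lra|]. apply Rmult_le_compat_l; [lra|].
    apply Rmult_le_compat_l; lra. }
  assert (I4 : U * (h ^ n1 * K) * Rabs B = L * h ^ n1 * Rabs A / 2) by (unfold K; field; lra).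
  assert (0 < L * h ^ n1 * Rabs A) by (apply Rmult_lt_0_compat; [apply Rmult_lt_0_compat|]; lra).
  lra.
Qed.

Section UnitKnots.
Variable t : list R.
Hypothesis Ht : unit_knots t.

Lemma knot_le a b : (a <= b)%nat -> (b < length t)%nat -> knot t a <= knot t b.
Proof. apply (proj1 Ht). Qed.

Lemma knot_bounds a : 0 <= knot t a <= 1.
Proof. apply (proj2 Ht). Qed.

Lemma bsp_neq0_support q j x : (j + q + 1 < length t)%nat -> bsp t q j x <> 0 ->
  knot t j <= x <= knot t (j + q + 1) /\ knot t j < knot t (j + q + 1).
Proof.
  revert j; induction q as [|q IH]; intros j Hl Hn.
  - replace (j + 0 + 1)%nat with (S j) by lia.
    destruct (bsp0_spec t j x) as [[[H|H] _]|[_ H]]; [lra|lra|simpl in Hn; congruence].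
  - rewrite bspS in Hn.
    destruct (Req_dec (bsp t q j x) 0) as [H1|H1].
    + destruct (Req_dec (bsp t q (S j) x) 0) as [H2|H2]; [rewrite H1, H2 in Hn; lra|].
      destruct (IH (S j) ltac:(lia) H2).
      replace (S j + q + 1)%nat with (j + S q + 1)%nat in * by lia.
      pose proof (knot_le j (S j) ltac:(lia) ltac:(lia)). lra.
    + destruct (IH j ltac:(lia) H1).
      pose proof (knot_le (j + q + 1) (j + S q + 1) ltac:(lia) ltac:(lia)). lra.
Qed.

Lemma bsp_outside_support q j x : (j + q + 1 < length t)%nat ->
  x < knot t j \/ knot t (j + q + 1) < x -> bsp t q j x = 0.
Proof.
  intros Hl Hx. apply NNPP; intro Hn.
  destruct (bsp_neq0_support q j x Hl Hn) as [[? ?] _]; lra.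
Qed.

Lemma bsp_repeated_knot q j x : (j + q + 1 < length t)%nat ->
  knot t j = x -> knot t (j + q) = x -> x < knot t (j + q + 1) -> bsp t q j x = 1.
Proof.
  revert j; induction q as [|q IH]; intros j Hl H1 H2 H3.
  - replace (j + 0 + 1)%nat with (S j) in * by lia.
    destruct (bsp0_spec t j x) as [[_ H]|[H _]]; [exact H|].
    exfalso; apply H; left; lra.
  - pose proof (knot_le j (S j) ltac:(lia) ltac:(lia)).
    pose proof (knot_le (S j) (j + S q) ltac:(lia) ltac:(lia)).
    assert (HS : knot t (S j) = x) by lra.
    rewrite bspS, H1, HS, Rminus_diag, frac0, frac_div by lra.
    rewrite (IH (S j)); replace (S j + q)%nat with (j + S q)%nat by lia;
      replace (S j + q + 1)%nat with (j + S q + 1)%nat by lia; try lia; try lra.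
    field; lra.
Qed.

Lemma bsp_at_0 q j : (j + q + 1 < length t)%nat -> bsp t q j 0 <> 0 ->
  knot t (j + q) = 0 /\ 0 < knot t (j + q + 1).
Proof.
  revert j; induction q as [|q IH]; intros j Hl Hn;
    destruct (bsp_neq0_support _ j 0 Hl Hn) as [[H0 _] _];
    pose proof (knot_bounds j).
  - replace (j + 0 + 1)%nat with (S j) by lia. replace (j + 0)%nat with j by lia.
    destruct (bsp0_spec t j 0) as [[[Hc|Hc] _]|[_ Hc]];
      [split; lra|split; lra|simpl in Hn; congruence].
  - assert (Hj : knot t j = 0) by lra.
    rewrite bspS, Hj, Rminus_0_r, frac0, Rmult_0_l, Rplus_0_l in Hn.
    assert (Hn' : bsp t q (S j) 0 <> 0) by (intro Z; apply Hn; rewrite Z; ring).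
    replace (j + S q)%nat with (S j + q)%nat by lia.
    replace (j + S q + 1)%nat with (S j + q + 1)%nat by lia.
    apply IH; [lia|exact Hn'].
Qed.

Lemma bsp_at_0_eq1 q j : (j + q + 1 < length t)%nat -> bsp t q j 0 <> 0 -> bsp t q j 0 = 1.
Proof.
  intros Hl Hn.
  destruct (bsp_neq0_support _ j 0 Hl Hn) as [[H0 _] _].
  destruct (bsp_at_0 q j Hl Hn). pose proof (knot_bounds j).
  apply bsp_repeated_knot; auto; lra.
Qed.

Lemma bsp_at_1 q j : (j + q + 1 < length t)%nat -> bsp t q j 1 <> 0 ->
  knot t j < 1 /\ knot t (S j) = 1.
Proof.
  revert j; induction q as [|q IH]; intros j Hl Hn.
  - pose proof (knot_bounds (S j)).
    destruct (bsp0_spec t j 1) as [[[Hc|Hc] _]|[_ Hc]];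
      [split; lra|split; lra|simpl in Hn; congruence].
  - rewrite bspS in Hn.
    destruct (classic (bsp t q (S j) 1 = 0)) as [Z|Z].
    + rewrite Z, Rmult_0_r, Rplus_0_r in Hn.
      apply IH; [lia|]. intro Z'; apply Hn; rewrite Z'; ring.
    + destruct (IH (S j) ltac:(lia) Z) as [_ H2].
      pose proof (knot_le (S (S j)) (j + S q + 1) ltac:(lia) ltac:(lia)).
      pose proof (knot_bounds (j + S q + 1)).
      replace (knot t (j + S q + 1) - 1) with 0 in Hn by lra.
      rewrite frac0, Rmult_0_l, Rplus_0_r in Hn.
      apply IH; [lia|]. intro Z'; apply Hn; rewrite Z'; ring.
Qed.

Lemma bsp_at_1_eq1 q j : (j + q + 1 < length t)%nat ->
  knot t j < 1 -> knot t (S j) = 1 -> bsp t q j 1 = 1.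
Proof.
  revert j; induction q as [|q IH]; intros j Hl H1 H2.
  - destruct (bsp0_spec t j 1) as [[_ H]|[H _]]; [exact H|].
    exfalso; apply H; right; lra.
  - assert (Z : bsp t q (S j) 1 = 0).
    { apply NNPP; intro Z. destruct (bsp_at_1 q (S j) ltac:(lia) Z). lra. }
    pose proof (knot_le (S j) (j + S q) ltac:(lia) ltac:(lia)).
    pose proof (knot_bounds (j + S q)).
    rewrite bspS, Z, Rmult_0_r, Rplus_0_r, IH by (lia || lra).
    replace (knot t (j + S q)) with 1 by lra.
    rewrite frac_div by lra. field; lra.
Qed.

Lemma bsp_near_left_knot q : forall j m a c,
  (j + q + 1 < length t)%nat -> (1 <= m <= q + 1)%nat ->
  (forall i, (i < m)%nat -> knot t (j + i) = a) -> knot t (j + m) = c -> a < c ->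
  grows_like (bsp t q j) a c (q + 1 - m).
Proof.
  induction q as [|q IH]; intros j m a c Hl Hm Ha Hc Hac.
  { replace m with 1%nat in * by lia. exists 1, 1. split; [lra|split; [lra|]].
    intros x Hx. simpl pow. specialize (Ha 0%nat ltac:(lia)). rewrite Nat.add_0_r in Ha.
    replace (j + 1)%nat with (S j) in Hc by lia.
    destruct (bsp0_spec t j x) as [[_ Hv]|[Hv _]]; [simpl; rewrite Hv; lra|].
    exfalso; apply Hv; left; lra. }
  assert (Ea : knot t j = a) by (rewrite <- (Nat.add_0_r j); apply Ha; lia).
  assert (Ra : 0 <= a) by (rewrite <- Ea; apply knot_bounds).
  set (T1 := knot t (j + S q)). set (T2 := knot t (j + S q + 1)).
  assert (HT2 : c <= T2) by (rewrite <- Hc; apply knot_le; lia).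
  assert (Hleft : (m <= q + 1)%nat ->
    grows_like (fun x => (x - a) / (T1 - a) * bsp t q j x) a c (S q + 1 - m)).
  { intros Hm'. replace (S q + 1 - m)%nat with (S (q + 1 - m)) by lia.
    apply grows_like_left_weight; [exact Ra| |apply knot_bounds|apply IH; auto; lia].
    split; [exact Hac|rewrite <- Hc; apply knot_le; lia]. }
  assert (Hright : (2 <= m)%nat ->
    grows_like (fun x => (T2 - x) / (T2 - a) * bsp t q (S j) x) a c (S q + 1 - m)).
  { intros Hm'. apply grows_like_right_weight; [lra|].
    replace (S q + 1 - m)%nat with (q + 1 - (m - 1))%nat by lia.
    apply IH; [lia|lia| |replace (S j + (m - 1))%nat with (j + m)%nat by lia; exact Hc|exact Hac].
    intros i Hi. replace (S j + i)%nat with (j + S i)%nat by lia. apply Ha. lia. }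
  assert (Hj1 : (2 <= m)%nat -> knot t (S j) = a)
    by (intros; replace (S j) with (j + 1)%nat by lia; apply Ha; lia).
  assert (HT1 : (m <= q + 1)%nat -> a < T1) by (intros; unfold T1; rewrite <- Ea, <- Hc in *;
    pose proof (knot_le (j + m) (j + S q) ltac:(lia) ltac:(lia)); lra).
  destruct (Nat.eq_dec m 1) as [->|Em1]; [|destruct (Nat.eq_dec m (S q + 1)) as [Em2|Em2]].
  - (* the right term vanishes: [B_(j+1)] starts at [c] *)
    apply (grows_like_ext (fun x => (x - a) / (T1 - a) * bsp t q j x)); [|apply Hleft; lia].
    intros x Hx. pose proof (HT1 ltac:(lia)).
    rewrite bspS, (bsp_outside_support q (S j) x)
      by (lia || (left; rewrite Nat.add_1_r in Hc; lra)).
    fold T1. rewrite Ea, frac_div by lra. ring.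
  - (* the support [[a, a]] of [B_j] is degenerate: the left term vanishes *)
    apply (grows_like_ext (fun x => (T2 - x) / (T2 - a) * bsp t q (S j) x)); [|apply Hright; lia].
    intros x Hx.
    rewrite bspS, (bsp_outside_support q j x)
      by (lia || (right; replace (j + q + 1)%nat with (j + S q)%nat by lia;
                  rewrite Ha by lia; lra)).
    fold T2. rewrite Rmult_0_r, Rplus_0_l, Hj1, frac_div by (lia || lra). reflexivity.
  - apply (grows_like_ext (fun x => (x - a) / (T1 - a) * bsp t q j x
                                    + (T2 - x) / (T2 - a) * bsp t q (S j) x));
      [|apply grows_like_plus; [apply Hleft|apply Hright]; lia].
    intros x Hx. pose proof (HT1 ltac:(lia)).
    rewrite bspS. fold T1 T2. rewrite Ea, Hj1, !frac_div by (lia || lra). reflexivity.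
Qed.

Lemma bsp_not_proportional_lt q j1 j2 A1 A2 : (j1 < j2)%nat -> (j2 + q + 1 < length t)%nat ->
  knot t j1 < knot t (j1 + q + 1) -> A1 <> 0 -> A2 <> 0 ->
  ~ (forall x, 0 <= x <= 1 -> bsp t q j1 x * A1 = bsp t q j2 x * A2).
Proof.
  intros Hj Hl Hnd HA1 HA2 Heq.
  set (a := knot t j1) in *.
  destruct (nat_transition (fun r => knot t (j1 + r) <= a) 0 (q + 1)) as [r [Hr [P1 P2]]].
  { lia. } { rewrite Nat.add_0_r; unfold a; lra. } { rewrite Nat.add_assoc; lra. }
  set (m1 := S r). set (c := knot t (j1 + m1)).
  assert (Run : forall i, (i < m1)%nat -> knot t (j1 + i) = a).
  { intros i Hi. pose proof (knot_le j1 (j1 + i) ltac:(lia) ltac:(lia)) as H1.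
    pose proof (knot_le (j1 + i) (j1 + r) ltac:(lia) ltac:(lia)). fold a in H1; lra. }
  assert (Hac : a < c) by (unfold c, m1; lra).
  pose proof (knot_bounds j1) as Ra. pose proof (knot_bounds (j1 + m1)) as Rc. fold a c in Ra, Rc.
  pose proof (bsp_near_left_knot q j1 m1 a c ltac:(lia) ltac:(unfold m1; lia) Run eq_refl Hac)
    as Hg1.
  destruct (le_lt_dec (j1 + m1) j2) as [Hc|Hc].
  - (* [B_j2] vanishes on [(a, c)], where [B_j1] does not *)
    set (x := (a + c) / 2).
    assert (Z : bsp t q j2 x = 0).
    { apply bsp_outside_support; [lia|left].
      pose proof (knot_le (j1 + m1) j2 Hc ltac:(lia)) as H1. fold c in H1. unfold x. lra. }
    pose proof (grows_like_pos _ a c _ x Hg1 ltac:(unfold x; lra)).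
    specialize (Heq x ltac:(unfold x; lra)). rewrite Z, Rmult_0_l in Heq.
    apply Rmult_integral in Heq as [H0|H0]; [lra|exact (HA1 H0)].
  - (* [a] has smaller multiplicity in the support of [B_j2], so [B_j2] vanishes faster *)
    set (m2 := (j1 + m1 - j2)%nat).
    pose proof (bsp_near_left_knot q j2 m2 a c ltac:(lia) ltac:(unfold m2, m1 in *; lia))
      as Hg2.
    apply (grows_like_not_proportional (bsp t q j1) (bsp t q j2) a c
             (q + 1 - m1) (q + 1 - m2) A1 A2);
      auto; try lia; try lra.
    + apply Hg2; [|unfold c, m2; f_equal; lia|exact Hac].
      intros i Hi. replace (j2 + i)%nat with (j1 + (j2 - j1 + i))%nat by lia.
      apply Run. unfold m2 in Hi; lia.
    + intros x Hx. apply Heq. lra.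
Qed.

Lemma bsp_not_proportional q j1 j2 A1 A2 y : j1 <> j2 ->
  (j1 + q + 1 < length t)%nat -> (j2 + q + 1 < length t)%nat -> A1 <> 0 -> A2 <> 0 ->
  0 <= y <= 1 -> bsp t q j1 y <> 0 ->
  ~ (forall x, 0 <= x <= 1 -> bsp t q j1 x * A1 = bsp t q j2 x * A2).
Proof.
  intros Hj Hl1 Hl2 HA1 HA2 Hy Hy1 Heq.
  destruct (Nat.lt_gt_cases j1 j2) as [[H|H] _]; [exact Hj|..].
  - exact (bsp_not_proportional_lt q j1 j2 A1 A2 H Hl2
             (proj2 (bsp_neq0_support q j1 y Hl1 Hy1)) HA1 HA2 Heq).
  - assert (Hy2 : bsp t q j2 y <> 0).
    { intro Z. apply Hy1. pose proof (Heq y Hy) as E. rewrite Z, Rmult_0_l in E.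
      apply Rmult_integral in E as [E|E]; [exact E|contradiction]. }
    apply (bsp_not_proportional_lt q j2 j1 A2 A1 H Hl1
             (proj2 (bsp_neq0_support q j2 y Hl2 Hy2)) HA2 HA1).
    intros x Hx. symmetry. apply Heq, Hx.
Qed.

End UnitKnots.

Lemma nondecreasing_knot_le t : nondecreasing t ->
  forall a b, (a <= b)%nat -> (b < length t)%nat -> knot t a <= knot t b.
Proof.
  intros Hn a b Hab. induction Hab as [|b Hab IH]; intros Hb; [lra|].
  enough (knot t b <= knot t (S b)) by (specialize (IH ltac:(lia)); lra).
  clear a Hab IH. revert b Hb; induction t as [|x r IHt]; intros b Hb; simpl in Hb; [lia|].
  destruct r as [|y r]; simpl in Hb; [lia|]. destruct Hn as [Hxy Hr].
  destruct b as [|b]; [exact Hxy|]. apply (IHt Hr b). simpl. lia.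
Qed.

Lemma unit_knots_of t : nondecreasing t -> Forall (fun x => 0 <= x <= 1) t -> unit_knots t.
Proof.
  intros Hn Hf. split; [apply nondecreasing_knot_le, Hn|].
  intros a. unfold knot. destruct (Nat.lt_ge_cases a (length t)) as [H|H].
  - rewrite Forall_forall in Hf. apply Hf, nth_In, H.
  - rewrite nth_overflow by exact H. lra.
Qed.

Lemma refine_cons2 a b r : refine (a :: b :: r) =
  if Rlt_dec a b then a :: (a + b) / 2 :: refine (b :: r) else a :: refine (b :: r).
Proof. reflexivity. Qed.

Lemma refine_cons a r : exists l, refine (a :: r) = a :: l.
Proof.
  destruct r as [|b r]; [eexists; reflexivity|].
  rewrite refine_cons2. destruct (Rlt_dec a b); eexists; reflexivity.
Qed.

Lemma refine_nondecreasing t : nondecreasing t -> nondecreasing (refine t).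
Proof.
  induction t as [|a r IH]; intros Hn; [exact I|].
  destruct r as [|b r]; [exact I|]. destruct Hn as [Hab Hr].
  specialize (IH Hr). destruct (refine_cons b r) as [l Hl].
  rewrite refine_cons2, Hl in *. destruct (Rlt_dec a b); simpl; repeat split; try lra; exact IH.
Qed.

Lemma refine_Forall (P : R -> Prop) t : (forall a b, P a -> P b -> P ((a + b) / 2)) ->
  Forall P t -> Forall P (refine t).
Proof.
  intros HP. induction t as [|a r IH]; intros Hf; [exact Hf|].
  destruct r as [|b r]; [exact Hf|].
  inversion Hf as [|? ? Ha Hr]; subst. inversion Hr; subst.
  rewrite refine_cons2. destruct (Rlt_dec a b); auto.
Qed.

Lemma refine_In x t : In x t -> In x (refine t).
Proof.
  induction t as [|a r IH]; intros H; [inversion H|].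
  destruct r as [|b r]; [exact H|]. rewrite refine_cons2.
  destruct (Rlt_dec a b); destruct H as [<-|H]; simpl; auto.
Qed.

Lemma refine_app l r : r <> [] -> exists l', refine (l ++ r) = l' ++ refine r.
Proof.
  intros Hr. induction l as [|a l [l' Hl']]; [exists []; reflexivity|].
  destruct (l ++ r) as [|b r'] eqn:E.
  - destruct l; simpl in E; [congruence|discriminate].
  - simpl app. rewrite E, refine_cons2, Hl'. destruct (Rlt_dec a b).
    + exists (a :: (a + b) / 2 :: l'). reflexivity.
    + exists (a :: l'). reflexivity.
Qed.

Lemma refine_repeat1 n : refine (repeat 1 n) = repeat 1 n.
Proof.
  induction n as [|[|n] IH]; [reflexivity|reflexivity|].
  change (repeat 1 (S (S n))) with (1 :: 1 :: repeat 1 n).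
  rewrite refine_cons2. destruct (Rlt_dec 1 1); [lra|].
  simpl in IH |- *. rewrite IH. reflexivity.
Qed.

Lemma refine_repeat0 n r : refine (repeat 0 (S n) ++ r) = repeat 0 n ++ refine (0 :: r).
Proof.
  induction n as [|n IH]; [reflexivity|].
  change (repeat 0 (S (S n)) ++ r) with (0 :: 0 :: (repeat 0 n ++ r)).
  rewrite refine_cons2. destruct (Rlt_dec 0 0); [lra|].
  simpl in IH |- *. rewrite IH. reflexivity.
Qed.

Definition open_knots (p : nat) (t : list R) : Prop :=
  exists l, t = repeat 0 (S p) ++ l ++ repeat 1 (S p).

Lemma refine_open p t : open_knots p t -> open_knots p (refine t).
Proof.
  intros [l ->]. rewrite refine_repeat0.
  destruct (refine_app (0 :: l) (repeat 1 (S p))) as [l' Hl']; [discriminate|].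
  rewrite refine_repeat1 in Hl'.
  change ((0 :: l) ++ repeat 1 (S p)) with (0 :: (l ++ repeat 1 (S p))) in Hl'.
  destruct (refine_cons 0 (l ++ repeat 1 (S p))) as [l3 H3].
  rewrite H3 in Hl' |- *. destruct l' as [|z l4].
  - simpl in Hl'. inversion Hl'. lra.
  - inversion Hl'; subst. exists l4.
    change (repeat 0 (S p)) with (0 :: repeat 0 p).
    rewrite (repeat_cons p (0 : R)), <- app_assoc. reflexivity.
Qed.

Lemma list_eq_repeat (u : list R) n x : length u = n ->
  (forall i, (i < n)%nat -> nth i u 0 = x) -> u = repeat x n.
Proof.
  revert n. induction u as [|a u IH]; intros [|n] Hl Hi; simpl in *; try lia; auto.
  f_equal; [apply (Hi 0%nat); lia|]. apply IH; [lia|]. intros i Hi'. apply (Hi (S i)). lia.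
Qed.

Lemma valid_knots_open p t : valid_knots p t -> open_knots p t.
Proof.
  intros [Hlen [_ [_ [He _]]]]. set (n := length t) in *.
  assert (Hn : (2 * p + 2 <= n)%nat).
  { apply Nat.nlt_ge; intro Hlt.
    destruct (He p ltac:(lia)) as [A _]. destruct (He (n - 1 - p)%nat ltac:(lia)) as [_ B].
    replace (n - 1 - (n - 1 - p))%nat with p in B by lia. lra. }
  exists (firstn (n - 2 * p - 2) (skipn (S p) t)).
  rewrite <- (firstn_skipn (S p) t) at 1. f_equal.
  - apply list_eq_repeat; [rewrite length_firstn; lia|].
    intros i Hi. rewrite nth_firstn. destruct (Nat.ltb_spec i (S p)); [|lia].
    apply (He i). lia.
  - rewrite <- (firstn_skipn (n - 2 * p - 2) (skipn (S p) t)) at 1. f_equal.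
    apply list_eq_repeat; [rewrite !length_skipn; lia|].
    intros i Hi. rewrite !nth_skipn.
    destruct (He (S p - 1 - i)%nat ltac:(lia)) as [_ B]. unfold knot in B. fold n in B.
    replace (n - 1 - (S p - 1 - i))%nat with (S p + (n - 2 * p - 2 + i))%nat in B by lia.
    exact B.
Qed.

Lemma open_knots_ends p t : open_knots p t ->
  (2 * p + 2 <= length t)%nat /\ (forall i, (i <= p)%nat -> knot t i = 0) /\
  (forall i, (i <= p)%nat -> knot t (length t - 1 - i) = 1).
Proof.
  intros [l ->]. rewrite !length_app, !repeat_length.
  split; [lia|split]; intros i Hi; unfold knot.
  - rewrite app_nth1 by (rewrite repeat_length; lia). apply nth_repeat_lt. lia.
  - rewrite app_assoc, app_nth2 by (rewrite length_app, repeat_length; lia).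
    rewrite length_app, repeat_length. apply nth_repeat_lt. lia.
Qed.

Lemma refined_knots p t0 : valid_knots p t0 -> forall k,
  unit_knots (Nat.iter k refine t0) /\ open_knots p (Nat.iter k refine t0).
Proof.
  intros Hv k.
  assert (H : nondecreasing (Nat.iter k refine t0) /\
              Forall (fun x => 0 <= x <= 1) (Nat.iter k refine t0)).
  { induction k as [|k [Hn Hf]]; simpl.
    - destruct Hv as [_ [Hn [Hr _]]]. split; [exact Hn|].
      apply Forall_forall. intros x Hx. destruct (In_nth t0 x 0 Hx) as [r [Hr1 <-]].
      apply (Hr r Hr1).
    - split; [apply refine_nondecreasing, Hn|]. apply refine_Forall; [intros; lra|exact Hf]. }
  split; [apply unit_knots_of; apply H|clear H].
  induction k as [|k IH]; [apply valid_knots_open, Hv|apply refine_open, IH].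
Qed.

Lemma refined_knots_incl t0 m k : (m <= k)%nat ->
  forall x, In x (Nat.iter m refine t0) -> In x (Nat.iter k refine t0).
Proof.
  induction 1 as [|k _ IH]; intros x Hx; [exact Hx|]. apply refine_In, IH, Hx.
Qed.

Section Endpoint.
Variable p : nat.
Variable t : list R.
Hypothesis Ht : unit_knots t.

Lemma bsp_endpoint_exists e : open_knots p t -> e = 0 \/ e = 1 ->
  exists j, (j < nbs t p)%nat /\ bsp t p j e = 1.
Proof.
  intros Ho He. destruct (open_knots_ends p t Ho) as [Hl [H0 H1]]. unfold nbs.
  destruct He as [->| ->].
  - destruct (nat_transition (fun r => knot t r = 0) p (length t - 1)) as [r [Hr [P1 P2]]].
    { lia. } { apply H0; lia. }
    { rewrite <- (Nat.sub_0_r (length t - 1)), H1 by lia. lra. }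
    exists (r - p)%nat. split; [lia|].
    pose proof (knot_bounds t Ht (S r)).
    pose proof (knot_le t Ht (r - p) r ltac:(lia) ltac:(lia)).
    pose proof (knot_bounds t Ht (r - p)).
    apply bsp_repeated_knot; [exact Ht|lia|lra|replace (r - p + p)%nat with r by lia; exact P1|].
    replace (r - p + p + 1)%nat with (S r) by lia. lra.
  - destruct (nat_transition (fun r => knot t r < 1) 0 (length t - 1 - p)) as [r [Hr [P1 P2]]].
    { lia. } { rewrite H0 by lia. lra. } { rewrite H1 by lia. lra. }
    exists r. split; [lia|].
    pose proof (knot_bounds t Ht (S r)).
    apply bsp_at_1_eq1; [exact Ht|lia|exact P1|lra].
Qed.

Lemma bsp_endpoint_eq1 e j : e = 0 \/ e = 1 -> (j < nbs t p)%nat ->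
  bsp t p j e <> 0 -> bsp t p j e = 1.
Proof.
  unfold nbs. intros [->| ->] Hj Hn.
  - apply (bsp_at_0_eq1 t Ht); [lia|exact Hn].
  - destruct (bsp_at_1 t Ht p j ltac:(lia) Hn). apply bsp_at_1_eq1; auto; lia.
Qed.

Lemma bsp_endpoint_unique e j1 j2 : e = 0 \/ e = 1 ->
  (j1 < nbs t p)%nat -> (j2 < nbs t p)%nat ->
  bsp t p j1 e <> 0 -> bsp t p j2 e <> 0 -> j1 = j2.
Proof.
  unfold nbs. intros [->| ->] H1 H2 N1 N2.
  - destruct (bsp_at_0 t Ht p j1 ltac:(lia) N1), (bsp_at_0 t Ht p j2 ltac:(lia) N2).
    destruct (Nat.lt_trichotomy j1 j2) as [L|[L|L]]; auto; exfalso.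
    + pose proof (knot_le t Ht (j1 + p + 1) (j2 + p) ltac:(lia) ltac:(lia)). lra.
    + pose proof (knot_le t Ht (j2 + p + 1) (j1 + p) ltac:(lia) ltac:(lia)). lra.
  - destruct (bsp_at_1 t Ht p j1 ltac:(lia) N1), (bsp_at_1 t Ht p j2 ltac:(lia) N2).
    destruct (Nat.lt_trichotomy j1 j2) as [L|[L|L]]; auto; exfalso.
    + pose proof (knot_le t Ht (S j1) j2 ltac:(lia) ltac:(lia)). lra.
    + pose proof (knot_le t Ht (S j2) j1 ltac:(lia) ltac:(lia)). lra.
Qed.

(* For [e = 0]: all knots up to [t_(j+p)] are [0], so the positive right end of a coarser cell
   touching [0], being a knot of [t], is at least [t_(j+p+1)]; symmetrically for [e = 1]. *)
Lemma bsp_endpoint_support_in_cell e j tm c y : e = 0 \/ e = 1 ->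
  (j < nbs t p)%nat -> bsp t p j e <> 0 -> unit_knots tm ->
  (forall a, (a < length tm)%nat -> In (knot tm a) t) ->
  (1 <= c < length tm)%nat -> knot tm (c - 1) < knot tm c -> knot tm (c - 1) <= e <= knot tm c ->
  knot t j <= y <= knot t (j + p + 1) -> knot tm (c - 1) <= y <= knot tm c.
Proof.
  unfold nbs. intros [->| ->] Hj Hn Htm Hinc Hc Hlt He Hy.
  - destruct (bsp_at_0 t Ht p j ltac:(lia) Hn).
    pose proof (knot_bounds t Ht j). pose proof (knot_bounds tm Htm (c - 1)). split; [lra|].
    destruct (In_nth t _ 0 (Hinc c ltac:(lia))) as [r [Hr Er]]. fold (knot t r) in Er.
    destruct (Nat.le_gt_cases r (j + p)) as [L|L].
    + pose proof (knot_le t Ht r (j + p) L ltac:(lia)). pose proof (knot_bounds t Ht r). lra.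
    + pose proof (knot_le t Ht (j + p + 1) r ltac:(lia) Hr). lra.
  - destruct (bsp_at_1 t Ht p j ltac:(lia) Hn).
    pose proof (knot_bounds t Ht (j + p + 1)). pose proof (knot_bounds tm Htm c). split; [|lra].
    destruct (In_nth t _ 0 (Hinc (c - 1)%nat ltac:(lia))) as [r [Hr Er]]. fold (knot t r) in Er.
    destruct (Nat.le_gt_cases r j) as [L|L].
    + pose proof (knot_le t Ht r j L ltac:(lia)). lra.
    + pose proof (knot_le t Ht (S j) r ltac:(lia) Hr). lra.
Qed.

End Endpoint.

Lemma prodR_ext n f g : (forall i, (i < n)%nat -> f i = g i) -> prodR n f = prodR n g.
Proof.
  induction n as [|n IH]; intros H; simpl; [reflexivity|].
  rewrite IH, H; [reflexivity|lia|intros i Hi; apply H; lia].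
Qed.

Lemma prodR_skip n f I : (I < n)%nat -> prodR n f = prodR (n - 1) (skip I f) * f I.
Proof.
  revert I. induction n as [|n IH]; intros I HI; [lia|].
  simpl prodR at 1. destruct (Nat.eq_dec I n) as [->|E].
  - replace (S n - 1)%nat with n by lia. f_equal.
    apply prodR_ext. intros i Hi. unfold skip. destruct (Nat.ltb_spec i n); [reflexivity|lia].
  - rewrite (IH I) by lia. replace (S n - 1)%nat with (S (n - 1)) by lia. simpl prodR.
    replace (skip I f (n - 1)) with (f n)
      by (unfold skip; destruct (Nat.ltb_spec (n - 1) I); [lia|f_equal; lia]).
    ring.
Qed.

Lemma prodR_neq0 n f : prodR n f <> 0 -> forall i, (i < n)%nat -> f i <> 0.
Proof.
  induction n as [|n IH]; intros H i Hi Z; [lia|]. simpl in H.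
  destruct (Nat.eq_dec i n) as [->|E]; [apply H; rewrite Z; ring|].
  apply (IH (fun W => H ltac:(rewrite W; ring)) i ltac:(lia) Z).
Qed.

Definition upd (I : nat) (e : R) (x : pt) : pt := fun i => if (i =? I)%nat then e else x i.

Lemma ins_skip I e x : ins I e (skip I x) = upd I e x.
Proof.
  apply functional_extensionality. intros i. unfold ins, skip, upd.
  destruct (Nat.ltb_spec i I); destruct (Nat.eqb_spec i I); try lia; try reflexivity.
  destruct (Nat.ltb_spec (i - 1) I); [lia|]. f_equal. lia.
Qed.

Lemma skip_ins I e s : skip I (ins I e s) = s.
Proof.
  apply functional_extensionality. intros i. unfold ins, skip.
  destruct (Nat.ltb_spec i I); [destruct (Nat.ltb_spec i I); [reflexivity|lia]|].
  destruct (Nat.ltb_spec (S i) I); [lia|]. destruct (Nat.eqb_spec (S i) I); [lia|]. f_equal. lia.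
Qed.

Lemma ins_at I e s : ins I e s I = e.
Proof. unfold ins. destruct (Nat.ltb_spec I I); [lia|]. rewrite Nat.eqb_refl. reflexivity. Qed.

Lemma skip_upd I e x : skip I (upd I e x) = skip I x.
Proof.
  apply functional_extensionality. intros i. unfold skip, upd.
  destruct (Nat.ltb_spec i I); [destruct (Nat.eqb_spec i I); [lia|reflexivity]|].
  destruct (Nat.eqb_spec (S i) I); [lia|reflexivity].
Qed.

Lemma upd_at I e x : upd I e x I = e.
Proof. unfold upd. rewrite Nat.eqb_refl. reflexivity. Qed.

Lemma bspline_split d p K0 k j I z : (I < d)%nat ->
  bspline d p K0 k j z = bspline (d - 1) (skip I p) (skip I K0) k (skip I j) (skip I z)
                          * bsp (knots K0 k I) (p I) (j I) (z I).
Proof.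
  intros HI. unfold bspline. rewrite (prodR_skip d _ I HI). f_equal.
  apply prodR_ext. intros i Hi. unfold skip, knots. destruct (i <? I)%nat; reflexivity.
Qed.

Section TensorSplines.
Variable d : nat.
Variable p : nat -> nat.
Variable K0 : nat -> list R.
Hypothesis HK : forall i, (i < d)%nat -> valid_knots (p i) (K0 i).

Lemma knots_unit k i : (i < d)%nat -> unit_knots (knots K0 k i).
Proof. intros Hi. apply (refined_knots _ _ (HK i Hi)). Qed.

Lemma knots_open k i : (i < d)%nat -> open_knots (p i) (knots K0 k i).
Proof. intros Hi. apply (refined_knots _ _ (HK i Hi)). Qed.

Lemma knots_incl m k i a : (m <= k)%nat -> (a < length (knots K0 m i))%nat ->
  In (knot (knots K0 m i) a) (knots K0 k i).
Proof. intros Hmk Ha. apply (refined_knots_incl _ m k Hmk), nth_In, Ha. Qed.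

Lemma bspline_neq0_support k j y i : valid_index d p K0 k j -> bspline d p K0 k j y <> 0 ->
  (i < d)%nat -> knot (knots K0 k i) (j i) <= y i <= knot (knots K0 k i) (j i + p i + 1).
Proof.
  intros Hv Hn Hi. pose proof (Hv i Hi) as Hj. unfold nbs in Hj.
  apply (bsp_neq0_support _ (knots_unit k i Hi) (p i)); [lia|].
  exact (prodR_neq0 _ _ Hn i Hi).
Qed.

Lemma bspline_neq0_cube k j y : valid_index d p K0 k j -> bspline d p K0 k j y <> 0 -> cube d y.
Proof.
  intros Hv Hn i Hi. pose proof (bspline_neq0_support k j y i Hv Hn Hi).
  pose proof (knot_bounds _ (knots_unit k i Hi) (j i)).
  pose proof (knot_bounds _ (knots_unit k i Hi) (j i + p i + 1)). lra.
Qed.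

Lemma closure_bspline_support k j x i : valid_index d p K0 k j ->
  closure d (fun y => bspline d p K0 k j y <> 0) x -> (i < d)%nat ->
  knot (knots K0 k i) (j i) <= x i <= knot (knots K0 k i) (j i + p i + 1).
Proof.
  intros Hv Hc Hi. split; apply Rnot_lt_le; intro Hx.
  - destruct (Hc (knot (knots K0 k i) (j i) - x i) ltac:(lra)) as [y [Hy Hd]].
    pose proof (bspline_neq0_support k j y i Hv Hy Hi).
    specialize (Hd i Hi). apply Rabs_def2 in Hd. lra.
  - destruct (Hc (x i - knot (knots K0 k i) (j i + p i + 1)) ltac:(lra)) as [y [Hy Hd]].
    pose proof (bspline_neq0_support k j y i Hv Hy Hi).
    specialize (Hd i Hi). apply Rabs_def2 in Hd. lra.
Qed.

Lemma closure_bspline_cube k j x : valid_index d p K0 k j ->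
  closure d (fun y => bspline d p K0 k j y <> 0) x -> cube d x.
Proof.
  intros Hv Hc i Hi. pose proof (closure_bspline_support k j x i Hv Hc Hi).
  pose proof (knot_bounds _ (knots_unit k i Hi) (j i)).
  pose proof (knot_bounds _ (knots_unit k i Hi) (j i + p i + 1)). lra.
Qed.

(* Linear independence in each direction: fixing the other coordinates of a point where
   the B-spline is nonzero turns an equality into a proportionality of univariate B-splines. *)
Lemma bspline_index_unique k j1 j2 s0 :
  valid_index d p K0 k j1 -> valid_index d p K0 k j2 -> cube d s0 ->
  bspline d p K0 k j1 s0 <> 0 -> eq_on d (bspline d p K0 k j1) (bspline d p K0 k j2) ->
  forall i, (i < d)%nat -> j1 i = j2 i.
Proof.
  intros Hv1 Hv2 Hs0 Hn Heq i Hi. apply NNPP; intro Hne.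
  set (A := fun j => bspline (d - 1) (skip i p) (skip i K0) k (skip i j) (skip i s0)).
  assert (Hsplit : forall j y, bspline d p K0 k j (upd i y s0)
                               = A j * bsp (knots K0 k i) (p i) (j i) y).
  { intros j y. rewrite (bspline_split d p K0 k j i) by exact Hi.
    rewrite skip_upd, upd_at. reflexivity. }
  assert (Hs0' : upd i (s0 i) s0 = s0).
  { apply functional_extensionality. intro l. unfold upd. destruct (Nat.eqb_spec l i); congruence. }
  assert (Hn2 : bspline d p K0 k j2 s0 <> 0) by (rewrite <- Heq by exact Hs0; exact Hn).
  rewrite <- Hs0', Hsplit in Hn, Hn2.
  pose proof (Hv1 i Hi); pose proof (Hv2 i Hi). unfold nbs in *.
  assert (HA1 : A j1 <> 0) by (intro Z; apply Hn; rewrite Z; ring).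
  assert (HA2 : A j2 <> 0) by (intro Z; apply Hn2; rewrite Z; ring).
  apply (bsp_not_proportional _ (knots_unit k i Hi) (p i) (j1 i) (j2 i) (A j1) (A j2) (s0 i)
           Hne ltac:(lia) ltac:(lia) HA1 HA2 (Hs0 i Hi) ltac:(intro Z; apply Hn; rewrite Z; ring)).
  intros y Hy. rewrite !(Rmult_comm _ (A _)), <- !Hsplit. apply Heq.
  intros l Hl. unfold upd. destruct (Nat.eqb_spec l i); [exact Hy|apply Hs0, Hl].
Qed.

End TensorSplines.

Definition ins_index (I a : nat) (j : nat -> nat) : nat -> nat :=
  fun i => if (i <? I)%nat then j i else if (i =? I)%nat then a else j (i - 1)%nat.

Lemma skip_ins_index I a j : skip I (ins_index I a j) = j.
Proof.
  apply functional_extensionality. intros i. unfold ins_index, skip.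
  destruct (Nat.ltb_spec i I); [destruct (Nat.ltb_spec i I); [reflexivity|lia]|].
  destruct (Nat.ltb_spec (S i) I); [lia|]. destruct (Nat.eqb_spec (S i) I); [lia|]. f_equal. lia.
Qed.

Lemma ins_index_at I a j : ins_index I a j I = a.
Proof.
  unfold ins_index. destruct (Nat.ltb_spec I I); [lia|]. rewrite Nat.eqb_refl. reflexivity.
Qed.

Section Face.
Variable d : nat.
Variable p : nat -> nat.
Variable K0 : nat -> list R.
Hypothesis HK : forall i, (i < d)%nat -> valid_knots (p i) (K0 i).
Variable Om : nat -> pt -> Prop.
Hypothesis Hmesh : hier_mesh d K0 Om.
Variable I : nat.
Hypothesis HI : (I < d)%nat.
Variable e : R.
Hypothesis He : e = 0 \/ e = 1.

Let face_bspline k j := bspline (d - 1) (skip I p) (skip I K0) k (skip I j).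
Let normal_bsp k (j : nat -> nat) y := bsp (knots K0 k I) (p I) (j I) y.

Lemma valid_knots_skip i : (i < d - 1)%nat -> valid_knots (skip I p i) (skip I K0 i).
Proof. intros Hi. unfold skip. destruct (i <? I)%nat; apply HK; lia. Qed.

Lemma bspline_on_face k j s :
  bspline d p K0 k j (ins I e s) = face_bspline k j s * normal_bsp k j e.
Proof. rewrite (bspline_split d p K0 k j I) by exact HI. rewrite skip_ins, ins_at. reflexivity. Qed.

Lemma valid_index_skip k j : valid_index d p K0 k j ->
  valid_index (d - 1) (skip I p) (skip I K0) k (skip I j).
Proof. intros Hv i Hi. unfold skip, knots. destruct (i <? I)%nat; apply Hv; lia. Qed.

Lemma valid_index_ins k a j : valid_index (d - 1) (skip I p) (skip I K0) k j ->
  (a < nbs (knots K0 k I) (p I))%nat -> valid_index d p K0 k (ins_index I a j).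
Proof.
  intros Hv Ha i Hi. unfold ins_index.
  destruct (Nat.ltb_spec i I).
  - specialize (Hv i ltac:(lia)). unfold skip, knots in Hv.
    destruct (Nat.ltb_spec i I); [exact Hv|lia].
  - destruct (Nat.eqb_spec i I) as [->|]; [exact Ha|].
    specialize (Hv (i - 1)%nat ltac:(lia)). unfold skip, knots in Hv.
    destruct (Nat.ltb_spec (i - 1) I); [lia|]. replace (S (i - 1)) with i in Hv by lia. exact Hv.
Qed.

Lemma cube_ins s : cube (d - 1) s -> cube d (ins I e s).
Proof.
  intros Hs i Hi. unfold ins. destruct (Nat.ltb_spec i I); [apply Hs; lia|].
  destruct (Nat.eqb_spec i I); [destruct He; lra|]. apply Hs; lia.
Qed.

Lemma closure_skip k j x : closure d (fun y => bspline d p K0 k j y <> 0) x ->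
  closure (d - 1) (fun y => face_bspline k j y <> 0) (skip I x).
Proof.
  intros Hc eps Heps. destruct (Hc eps Heps) as [y [Hy Hdist]].
  exists (skip I y). split.
  - intro Z. apply Hy. rewrite (bspline_split d p K0 k j I y HI). fold (face_bspline k j).
    rewrite Z. ring.
  - intros i Hi. unfold skip. destruct (i <? I)%nat; apply Hdist; lia.
Qed.

Lemma closure_ins k j s : normal_bsp k j e <> 0 ->
  closure (d - 1) (fun y => face_bspline k j y <> 0) s ->
  closure d (fun y => bspline d p K0 k j y <> 0) (ins I e s).
Proof.
  intros Hb Hc eps Heps. destruct (Hc eps Heps) as [y [Hy Hdist]].
  exists (ins I e y). split.
  - rewrite bspline_on_face. intro Z. apply Rmult_integral in Z as [Z|Z]; contradiction.
  - intros i Hi. unfold ins. destruct (Nat.ltb_spec i I); [apply Hdist; lia|].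
    destruct (Nat.eqb_spec i I); [rewrite Rminus_diag, Rabs_R0; exact Heps|apply Hdist; lia].
Qed.

Lemma mesh_antitone m k : (m <= k)%nat -> forall x, Om k x -> Om m x.
Proof.
  destruct Hmesh as [_ [Hstep _]]. induction 1 as [|k _ IH]; intros x Hx; [exact Hx|].
  apply IH, Hstep, Hx.
Qed.

(* [Om (S m)] is a union of level-[m] cells, and in direction [I] the support of a
   B-spline not vanishing at [e] lies in the level-[m] cell (m <= k) that touches [e]. *)
Lemma mesh_from_face k j x m : valid_index d p K0 k j -> normal_bsp k j e <> 0 ->
  closure d (fun y => bspline d p K0 k j y <> 0) x -> (m <= k)%nat ->
  Om (S m) (upd I e x) -> Om (S m) x.
Proof.
  intros Hv Hb Hc Hm Hz. destruct Hmesh as [_ [_ [Hcells _]]].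
  destruct (Hcells m) as [C HC]. apply HC in Hz as [c [Cc [Hcell Hin]]].
  apply HC. exists c. split; [exact Cc|split; [exact Hcell|]].
  unfold in_cell in *. intros i Hi. specialize (Hin i Hi). unfold upd in Hin.
  destruct (Nat.eqb_spec i I) as [E|]; [subst i|exact Hin].
  destruct (Hcell I Hi) as [Hc1 Hc2].
  apply (bsp_endpoint_support_in_cell (p I) (knots K0 k I) (knots_unit d p K0 HK k I HI) e (j I)
           (knots K0 m I) (c I) (x I) He (Hv I HI) Hb (knots_unit d p K0 HK m I HI)); auto.
  - intros a Ha. apply (knots_incl K0 m k I a Hm Ha).
  - exact (closure_bspline_support d p K0 HK k j x I Hv Hc HI).
Qed.

Lemma inH_face_data b : inH d p K0 Om b -> nonzero_on (d - 1) (restr I e b) ->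
  exists k j, valid_index d p K0 k j /\
    supp_sub d (bspline d p K0 k j) (Om k) /\ ~ supp_sub d (bspline d p K0 k j) (Om (S k)) /\
    eq_on d b (bspline d p K0 k j) /\ normal_bsp k j e = 1 /\
    eq_on (d - 1) (restr I e b) (face_bspline k j).
Proof.
  intros [k [j [Hv [Hs [Hns Heq]]]]] [s0 [Hs0 Hb0]].
  assert (Hn : normal_bsp k j e = 1).
  { apply (bsp_endpoint_eq1 (p I) _ (knots_unit d p K0 HK k I HI) e (j I) He (Hv I HI)).
    intro Z. apply Hb0. unfold restr. rewrite Heq, bspline_on_face by (apply cube_ins, Hs0).
    unfold normal_bsp. rewrite Z. ring. }
  exists k, j. repeat split; auto.
  intros s Hsc. unfold restr. rewrite Heq, bspline_on_face, Hn by (apply cube_ins, Hsc). ring.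
Qed.

Lemma inH_lift b' : inH (d - 1) (skip I p) (skip I K0) (restrOm I e Om) b' ->
  exists b, inH d p K0 Om b /\ nonzero_on (d - 1) (restr I e b) /\
            eq_on (d - 1) (restr I e b) b'.
Proof.
  intros [k [j' [Hv' [Hs' [Hns' Heq']]]]].
  destruct (bsp_endpoint_exists (p I) _ (knots_unit d p K0 HK k I HI) e
              (knots_open d p K0 HK k I HI) He) as [a [Ha Hba]].
  set (j := ins_index I a j').
  assert (Hv : valid_index d p K0 k j) by (apply valid_index_ins; assumption).
  assert (Hn : normal_bsp k j e = 1) by (unfold normal_bsp, j; rewrite ins_index_at; exact Hba).
  assert (Hfj : face_bspline k j = bspline (d - 1) (skip I p) (skip I K0) k j')
    by (unfold face_bspline, j; rewrite skip_ins_index; reflexivity).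
  assert (Hface : forall s, bspline d p K0 k j (ins I e s)
                            = bspline (d - 1) (skip I p) (skip I K0) k j' s)
    by (intros s; rewrite bspline_on_face, Hn, Hfj; ring).
  exists (bspline d p K0 k j). split; [|split].
  - exists k, j. split; [exact Hv|split; [|split]].
    + intros x Hx.
      assert (Hz : Om k (upd I e x)).
      { rewrite <- ins_skip. apply Hs'. rewrite <- Hfj. exact (closure_skip k j x Hx). }
      destruct k as [|m].
      * apply (proj1 Hmesh), (closure_bspline_cube d p K0 HK 0 j x Hv Hx).
      * exact (mesh_from_face (S m) j x m Hv ltac:(rewrite Hn; lra) Hx (Nat.le_succ_diag_r m) Hz).
    + intro H. apply Hns'. intros s Hc. apply H, closure_ins; [rewrite Hn; lra|].
      rewrite Hfj. exact Hc.
    + intros x _. reflexivity.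
  - apply NNPP. intro Hz. apply Hns'. intros s Hc. exfalso.
    destruct (Hc 1 ltac:(lra)) as [y [Hy _]]. apply Hz. exists y. split.
    + exact (bspline_neq0_cube (d - 1) (skip I p) (skip I K0) valid_knots_skip k j' y Hv' Hy).
    + unfold restr. rewrite Hface. exact Hy.
  - intros s Hc. unfold restr. rewrite Hface. symmetry. apply Heq', Hc.
Qed.

Lemma restr_inH b : inH d p K0 Om b -> nonzero_on (d - 1) (restr I e b) ->
  inH (d - 1) (skip I p) (skip I K0) (restrOm I e Om) (restr I e b).
Proof.
  intros Hb Hnz.
  destruct (inH_face_data b Hb Hnz) as [k [j [Hv [Hs [Hns [_ [Hn Hr]]]]]]].
  exists k, (skip I j). split; [apply valid_index_skip, Hv|split; [|split]].
  - intros s Hc. apply Hs, closure_ins; [rewrite Hn; lra|exact Hc].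
  - intro H. apply Hns. intros x Hx.
    pose proof (H (skip I x) (closure_skip k j x Hx)) as Hz. unfold restrOm in Hz.
    rewrite ins_skip in Hz.
    exact (mesh_from_face k j x k Hv ltac:(rewrite Hn; lra) Hx (le_n k) Hz).
  - exact Hr.
Qed.

(* A basis function of level [k1] is not supported in [Om (S k1)], whereas one of a higher
   level [k2] is supported in [Om k2], a subset of [Om (S k1)]; equal face restrictions
   would transport the support of the latter to the former. *)
Lemma face_neq_of_level_lt k1 j1 k2 j2 : (k1 < k2)%nat -> valid_index d p K0 k1 j1 ->
  normal_bsp k1 j1 e <> 0 -> normal_bsp k2 j2 e <> 0 ->
  ~ supp_sub d (bspline d p K0 k1 j1) (Om (S k1)) -> supp_sub d (bspline d p K0 k2 j2) (Om k2) ->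
  ~ eq_on (d - 1) (face_bspline k1 j1) (face_bspline k2 j2).
Proof.
  intros Hk Hv1 Hb1 Hb2 Hns1 Hs2 HE. apply Hns1. intros x Hx.
  assert (Hc2 : closure (d - 1) (fun y => face_bspline k2 j2 y <> 0) (skip I x)).
  { intros eps Heps. destruct (closure_skip k1 j1 x Hx eps Heps) as [y [Hy Hdist]].
    exists y. split; [|exact Hdist]. rewrite <- HE; [exact Hy|].
    exact (bspline_neq0_cube (d - 1) (skip I p) (skip I K0) valid_knots_skip k1 (skip I j1) y
             (valid_index_skip k1 j1 Hv1) Hy). }
  pose proof (Hs2 _ (closure_ins k2 j2 (skip I x) Hb2 Hc2)) as Hz. rewrite ins_skip in Hz.
  apply (mesh_from_face k1 j1 x k1 Hv1 Hb1 Hx (le_n k1)).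
  exact (mesh_antitone (S k1) k2 Hk _ Hz).
Qed.

Lemma face_index_eq k j1 j2 s0 : valid_index d p K0 k j1 -> valid_index d p K0 k j2 ->
  normal_bsp k j1 e <> 0 -> normal_bsp k j2 e <> 0 ->
  cube (d - 1) s0 -> face_bspline k j1 s0 <> 0 ->
  eq_on (d - 1) (face_bspline k j1) (face_bspline k j2) -> forall i, (i < d)%nat -> j1 i = j2 i.
Proof.
  intros Hv1 Hv2 Hb1 Hb2 Hs0 Hn HE i Hi.
  pose proof (bspline_index_unique (d - 1) (skip I p) (skip I K0) valid_knots_skip k
                (skip I j1) (skip I j2) s0 (valid_index_skip k j1 Hv1) (valid_index_skip k j2 Hv2)
                Hs0 Hn HE) as Hskip.
  unfold skip in Hskip.
  destruct (Nat.lt_trichotomy i I) as [Hlt|[->|Hgt]].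
  - specialize (Hskip i ltac:(lia)). destruct (Nat.ltb_spec i I); [exact Hskip|lia].
  - exact (bsp_endpoint_unique (p I) _ (knots_unit d p K0 HK k I HI) e (j1 I) (j2 I) He
             (Hv1 I HI) (Hv2 I HI) Hb1 Hb2).
  - specialize (Hskip (i - 1)%nat ltac:(lia)).
    destruct (Nat.ltb_spec (i - 1) I); [lia|]. replace (S (i - 1)) with i in Hskip by lia.
    exact Hskip.
Qed.

Lemma restr_injective b1 b2 : inH d p K0 Om b1 -> inH d p K0 Om b2 -> ~ eq_on d b1 b2 ->
  nonzero_on (d - 1) (restr I e b1) -> ~ eq_on (d - 1) (restr I e b1) (restr I e b2).
Proof.
  intros H1 H2 Hne Hnz Hr.
  assert (Hnz2 : nonzero_on (d - 1) (restr I e b2)).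
  { destruct Hnz as [s [Hs Hb]]. exists s.
    split; [exact Hs|]. rewrite <- Hr by exact Hs. exact Hb. }
  destruct (inH_face_data b1 H1 Hnz) as [k1 [j1 [Hv1 [Hs1 [Hns1 [Heq1 [Hn1 Hr1]]]]]]].
  destruct (inH_face_data b2 H2 Hnz2) as [k2 [j2 [Hv2 [Hs2 [Hns2 [Heq2 [Hn2 Hr2]]]]]]].
  assert (HE : eq_on (d - 1) (face_bspline k1 j1) (face_bspline k2 j2)).
  { intros s Hs. rewrite <- Hr1, <- Hr2, Hr by exact Hs. reflexivity. }
  assert (Hb1 : normal_bsp k1 j1 e <> 0) by (rewrite Hn1; lra).
  assert (Hb2 : normal_bsp k2 j2 e <> 0) by (rewrite Hn2; lra).
  destruct (Nat.lt_trichotomy k1 k2) as [Hk|[<-|Hk]].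
  - exact (face_neq_of_level_lt k1 j1 k2 j2 Hk Hv1 Hb1 Hb2 Hns1 Hs2 HE).
  - destruct Hnz as [s0 [Hs0 Hb0]]. rewrite Hr1 in Hb0 by exact Hs0.
    apply Hne. intros x Hx. rewrite Heq1, Heq2 by exact Hx.
    unfold bspline. apply prodR_ext. intros i Hi.
    rewrite (face_index_eq k1 j1 j2 s0 Hv1 Hv2 Hb1 Hb2 Hs0 Hb0 HE i Hi). reflexivity.
  - apply (face_neq_of_level_lt k2 j2 k1 j1 Hk Hv2 Hb2 Hb1 Hns2 Hs1).
    intros s Hs. symmetry. apply HE, Hs.
Qed.

End Face.

Theorem proposition3p1
  (d : nat) (Hd : (2 <= d)%nat)
  (p : nat -> nat) (Hp : forall i, (i < d)%nat -> (1 <= p i)%nat)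
  (K0 : nat -> list R) (HK : forall i, (i < d)%nat -> valid_knots (p i) (K0 i))
  (Om : nat -> pt -> Prop) (Hmesh : hier_mesh d K0 Om)
  (I : nat) (HI : (I < d)%nat) (e : R) (He : e = 0 \/ e = 1) :
  (forall b', inH (d - 1) (skip I p) (skip I K0) (restrOm I e Om) b' ->
     exists b, inH d p K0 Om b /\ nonzero_on (d - 1) (restr I e b) /\
               eq_on (d - 1) (restr I e b) b') /\
  (forall b, inH d p K0 Om b -> nonzero_on (d - 1) (restr I e b) ->
     inH (d - 1) (skip I p) (skip I K0) (restrOm I e Om) (restr I e b)) /\
  (forall b1 b2, inH d p K0 Om b1 -> inH d p K0 Om b2 -> ~ eq_on d b1 b2 ->
     nonzero_on (d - 1) (restr I e b1) ->
     ~ eq_on (d - 1) (restr I e b1) (restr I e b2)).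
Proof.
  split; [|split].
  - exact (inH_lift d p K0 HK Om Hmesh I HI e He).
  - exact (restr_inH d p K0 HK Om Hmesh I HI e He).
  - exact (restr_injective d p K0 HK Om Hmesh I HI e He).
Qed.
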